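(* If $G$ is a graph of order $n\ge 7$ having at least one vertex $u$ with $3\le\deg(u)\le n-4$, then $\beta_p(G)\le n-3$.
   Context: All graphs are finite, simple, undirected and connected. For a partition $\Pi=\{S_1,\dots,S_m\}$ of $V(G)$, $r(u|\Pi)=(d(u,S_1),\dots,d(u,S_m))$ with $d(u,S)=\min_{w\in S}d(u,w)$; $\Pi$ is locating if $r(u|\Pi)\ne r(v|\Pi)$ for all distinct $u,v$; $\beta_p(G)$ is the minimum size of a locating partition. *)

From mathcomp Require Import all_boot.
Set Implicit Arguments. Unset Strict Implicit. Unset Printing Implicit Defensive.

Section Graphs.
Variables (T : finType) (e : rel T).

Definition simple_graph := symmetric e /\ irreflexive e.
Definition connected_graph := forall u v : T, connect e u v.

Definition nbhd (u : T) : {set T} := [set w | e u w].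
Definition deg (u : T) : nat := #|nbhd u|.

Fixpoint ball (k : nat) (u : T) : {set T} :=
  match k with
  | 0 => [set u]
  | k'.+1 => ball k' u :|: \bigcup_(w in ball k' u) nbhd w
  end.

(* graph distance d(u,v): least k with v in ball k u
   (in a connected graph this is < #|T|) *)
Definition dist (u v : T) : nat := find (fun k => v \in ball k u) (iota 0 #|T|).

Definition dist_set (u : T) (S : {set T}) : nat :=
  \big[minn/#|T|]_(w in S) dist u w.

Definition locatingb (P : {set {set T}}) : bool :=
  partition P [set: T] &&
  [forall u, forall v, (u != v) ==> [exists S in P, dist_set u S != dist_set v S]].

(* partition dimension: minimum size of a locating partition
   (the singleton partition is locating and has size #|T|, so the default
   #|T| does not affect the minimum) *)
Definition beta_p : nat :=
  \big[minn/#|T|]_(P : {set {set T}} | locatingb P) #|P|.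

End Graphs.

(* Pair k = min(deg u, n - 1 - deg u) neighbours of u with as many non-neighbours
   and keep every other vertex, u included, as a singleton block.  Two vertices in
   different blocks are told apart by the block of either (distance 0 versus
   positive), and the two vertices of a pair by the block {u}, at distance 1 from
   exactly one of them.  This locating partition has n - k blocks. *)

From mathcomp Require Import all_boot zify.
Set Implicit Arguments. Unset Strict Implicit. Unset Printing Implicit Defensive.

(* The default [x] is not a unit for [minn], so [bigD1] does not apply. *)
Lemma bigminn_le_cond (I : finType) (P : pred I) (F : I -> nat) (x : nat) j :
  P j -> \big[minn/x]_(i | P i) F i <= F j.
Proof.
move=> Pj; rewrite -big_filter.
have : j \in [seq i <- index_enum I | P i] by rewrite mem_filter Pj mem_index_enum.
elim: [seq i <- index_enum I | P i] => //= a s IHs.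
rewrite inE big_cons => /orP [/eqP <-|/IHs]; first exact: geq_minl.
by rewrite geq_min => ->; rewrite orbT.
Qed.

Section Distance.
Variables (T : finType) (e : rel T).
Hypothesis card_gt1 : 1 < #|T|.

Lemma iota0_card : iota 0 #|T| = 0 :: 1 :: iota 2 (#|T| - 2).
Proof. by move: card_gt1; case: #|T| => [|[|n]] //= _; rewrite subn2. Qed.

Lemma dist_eq0 x y : (dist e x y == 0) = (x == y).
Proof. by rewrite /dist iota0_card /= inE; case: (eqVneq y x). Qed.

Lemma dist_eq1 x y : (dist e x y == 1) = (x != y) && e x y.
Proof.
rewrite /dist iota0_card /= big_set1 !inE.
by case: (eqVneq y x) => [->|]; case: (e x y).
Qed.

Lemma dist_set_eq0 x (S : {set T}) : (dist_set e x S == 0) = (x \in S).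
Proof.
have [xS|xNS] := boolP (x \in S).
  by rewrite -leqn0 (leq_trans (bigminn_le_cond _ _ xS)) // leqn0 dist_eq0.
apply/negbTE; rewrite -lt0n; apply: (big_ind (fun k => 0 < k)) => [|a b|w wS].
- exact: ltnW.
- by rewrite leq_min => -> ->.
- by rewrite lt0n dist_eq0; apply: contraNneq xNS => ->.
Qed.
Lemma dist_le_card x y : dist e x y <= #|T|.
Proof. by rewrite /dist (leq_trans (find_size _ _)) ?size_iota. Qed.

Lemma dist_set1 x u : dist_set e x [set u] = dist e x u.
Proof.
apply/eqP; rewrite eqn_leq (bigminn_le_cond _ _ (set11 u)).
apply: (big_ind (fun k => dist e x u <= k)) => [|a b|w].
- exact: dist_le_card.
- by rewrite leq_min => -> ->.
- by rewrite inE => /eqP ->.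
Qed.

End Distance.

Lemma beta_p_le_card (T : finType) (e : rel T) (P : {set {set T}}) :
  locatingb e P -> beta_p e <= #|P|.
Proof. exact: bigminn_le_cond. Qed.

Lemma card_preim_partition_le (T rT : finType) (f : T -> rT) (D : {set T}) :
  #|preim_partition f D| <= #|f @: D|.
Proof.
have -> : preim_partition f D = (fun v => [set z in D | v == f z]) @: (f @: D).
  by rewrite -imset_comp; apply: eq_imset.
exact: leq_imset_card.
Qed.

Section PreimLocating.
Variables (T rT : finType) (e : rel T) (f : T -> rT) (u : T).
Hypotheses (sym_e : symmetric e) (card_gt1 : 1 < #|T|).
Hypothesis fibre_u : forall z, f z = f u -> z = u.
Hypothesis fibre_split : forall x y, x != y -> f x = f y -> e u x != e u y.

Lemma preim_partition_locating : locatingb e (preim_partition f [set: T]).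
Proof.
rewrite /locatingb preim_partitionP /=.
apply/forallP => x; apply/forallP => y; apply/implyP => neq_xy; apply/existsP.
have block_mem z : [set w in [set: T] | f z == f w] \in preim_partition f [set: T].
  by apply/imsetP; exists z.
have [fxy|nfxy] := eqVneq (f x) (f y); last first.
  exists [set w in [set: T] | f x == f w]; rewrite block_mem /=.
  have /eqP -> : dist_set e x [set w in [set: T] | f x == f w] == 0.
    by rewrite dist_set_eq0 // !inE eqxx.
  by rewrite eq_sym dist_set_eq0 // !inE.
exists [set w in [set: T] | f u == f w]; rewrite block_mem /=.
have -> : [set w in [set: T] | f u == f w] = [set u].
  by apply/setP => z; rewrite !inE eq_sym; apply/eqP/eqP => [/fibre_u|->].
have neq_u z : f z = f x -> z != u.
  move=> fzx; apply: contraNneq neq_xy => zu.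
  have fux : f u = f x by rewrite -zu.
  by rewrite (fibre_u (esym fux)) (fibre_u (esym (etrans fux fxy))).
have adj_dist1 z : f z = f x -> e u z = (dist e z u == 1).
  by move=> fzx; rewrite dist_eq1 // neq_u // sym_e.
rewrite !dist_set1; apply: contra_neq (fibre_split neq_xy fxy) => dxy.
by rewrite adj_dist1 // adj_dist1 // dxy.
Qed.

End PreimLocating.

Section PairOff.
Variables (T : finType) (A B : {set T}).
Hypotheses (card_BA : #|B| <= #|A|) (disj_AB : [disjoint A & B]).

Definition pair_off (z : T) : T :=
  if z \in B then nth z (enum A) (index z (enum B)) else z.

Lemma index_enum_lt_cardA z : z \in B -> index z (enum B) < size (enum A).
Proof. by move=> zB; rewrite -cardE (leq_trans _ card_BA) // cardE index_mem mem_enum. Qed.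

Lemma pair_off_in z : z \in B -> pair_off z \in A.
Proof. by move=> zB; rewrite /pair_off zB -mem_enum mem_nth ?index_enum_lt_cardA. Qed.

Lemma pair_off_out z : z \notin B -> pair_off z = z.
Proof. by rewrite /pair_off => /negbTE ->. Qed.

Lemma pair_off_inj : {in B &, injective pair_off}.
Proof.
move=> x y xB yB; rewrite /pair_off xB yB (set_nth_default y) ?index_enum_lt_cardA //.
move/eqP; rewrite nth_uniq ?index_enum_lt_cardA ?enum_uniq // => /eqP.
by move/(congr1 (nth x (enum B))); rewrite !nth_index ?mem_enum.
Qed.

Lemma pair_off_fibre x y :
  x != y -> pair_off x = pair_off y -> (x \in A) != (y \in A).
Proof.
move=> neq_xy; have [xB|xNB] := boolP (x \in B); have [yB|yNB] := boolP (y \in B).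
- by move/pair_off_inj => /(_ xB yB) xy; rewrite xy eqxx in neq_xy.
- rewrite (pair_off_out yNB) => <-; by rewrite pair_off_in // (disjointFl disj_AB xB).
- rewrite (pair_off_out xNB) => ->; by rewrite pair_off_in // (disjointFl disj_AB yB).
- by rewrite !pair_off_out // => xy; rewrite xy eqxx in neq_xy.
Qed.

Lemma pair_off_fibre_fixed u z :
  u \notin A -> u \notin B -> pair_off z = pair_off u -> z = u.
Proof.
move=> uNA uNB; rewrite (pair_off_out uNB) => fzu.
have [zB|zNB] := boolP (z \in B); last by rewrite -fzu pair_off_out.
by rewrite -fzu pair_off_in in uNA.
Qed.

Lemma card_pair_off_image : #|pair_off @: [set: T]| <= #|T| - #|B|.
Proof.
rewrite -(cardsC B) addKn; apply: subset_leq_card.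
apply/subsetP => _ /imsetP [z _ ->]; rewrite inE.
have [zB|zNB] := boolP (z \in B); last by rewrite pair_off_out.
by rewrite (disjointFr disj_AB) ?pair_off_in.
Qed.

End PairOff.

Theorem beta_p_le_sub_min_deg (T : finType) (e : rel T) (u : T) :
  simple_graph e -> 1 < #|T| ->
  beta_p e <= #|T| - minn (deg e u) (#|T| - (deg e u).+1).
Proof.
move=> [sym_e irr_e] card_gt1.
set A := nbhd e u; set C := ~: (u |: A); set k := minn #|A| #|C|.
set B := [set z in take k (enum C)].
have uNA : u \notin A by rewrite inE irr_e.
have card_C : #|C| = #|T| - (deg e u).+1.
  by rewrite -(cardsC (u |: A)) cardsU1 uNA addKn.
have card_B : #|B| = k.
  rewrite cardsE (card_uniqP _) ?take_uniq ?enum_uniq //.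
  by rewrite size_takel // -cardE geq_minr.
have sub_BC : B \subset C by apply/subsetP => z; rewrite inE => /mem_take; rewrite mem_enum.
have uNB : u \notin B by apply: contraTN (setU11 u A) => /(subsetP sub_BC); rewrite inE.
have disj_AB : [disjoint A & B].
  rewrite disjoint_sym disjoint_subset; apply: subset_trans sub_BC _.
  by apply/subsetP => z; rewrite !inE negb_or => /andP [].
have card_BA : #|B| <= #|A| by rewrite card_B geq_minl.
pose P := preim_partition (pair_off A B) [set: T].
have P_locating : locatingb e P.
  apply: (preim_partition_locating (u := u)) => // [z|x y neq_xy].
    exact: pair_off_fibre_fixed.
  by move/(pair_off_fibre card_BA disj_AB neq_xy); rewrite !inE.
apply: leq_trans (beta_p_le_card P_locating) _.
apply: leq_trans (card_preim_partition_le _ _) _.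
by rewrite -card_C -[minn _ _]/k -card_B card_pair_off_image.
Qed.

Theorem corollary11 (T : finType) (e : rel T) :
  simple_graph e -> connected_graph e ->
  7 <= #|T| ->
  (exists u : T, 3 <= deg e u <= #|T| - 4) ->
  beta_p e <= #|T| - 3.
Proof.
move=> simple_e _ card_ge7 [u /andP [deg_ge3 deg_le]].
apply: leq_trans (beta_p_le_sub_min_deg u simple_e _) _; first exact: leq_trans card_ge7.
by apply: leq_sub2l; rewrite leq_min deg_ge3; lia.
Qed.
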